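(* Let $\beta=(\beta_1,\dots,\beta_k)$ be a weak composition. Let $n_1<n_2<\dots<n_k$ be positive integers, and set $n_0=0$. Then $$n_1^{\beta_1}n_2^{\beta_2}\cdots n_k^{\beta_k}=\sum_{I=(i_1,\dots,i_k)}c_{\beta,I}\binom{n_1-1}{i_1}\binom{n_2-n_1-1}{i_2}\cdots\binom{n_k-n_{k-1}-1}{i_k}.$$ The sum runs over all $I\in\mathbb N^k$ with $\sum_{t=j}^k i_t\le\sum_{t=j}^k\beta_t$ for $j=1,\dots,k$, and $\binom{m}{n}=0$ if $m<n$.
   Context: $\mathbb N$ denotes the nonnegative integers, and $[n]=\{1,\dots,n\}$ (empty if $n=0$). Filtered pointed Stirling numbers. For $\beta\in\mathbb N^k$ put $b_j=\beta_1+\dots+\beta_j$, $b_0=0$. For $I=(i_1,\dots,i_k)\in\mathbb N^k$ put $N_j=(i_1+1)+\dots+(i_j+1)$, $N_0=0$. Then $c_{\beta,I}$ is the number of maps $f:[b_k]\to[N_k]$ such that: - $f([b_j])\subseteq[N_j]$ for all $j=1,\dots,k$, and - $f([b_k])\cup\{N_1,\dots,N_k\}=[N_k]$. When $\beta=0^k$, only the empty map exists, so $c_{0^k,0^k}=1$. Equivalently, for any $n_1<\dots<n_k$ and subsets $Y_j\subseteq[n_{j-1}+1,n_j-1]$ with $|Y_j|=i_j$, $c_{\beta,I}$ is the number of maps $f:[b_k]\to[n_k]$ with $f([b_j])\subseteq[n_j]$ for all $j$ and $f([b_k])\cap[n_{j-1}+1,n_j-1]=Y_j$ for all $j$. For $k=1$,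 $c_{(m),(i)}=i!\,S(m+1,i+1)$ with $S$ the Stirling numbers of the second kind. *)

From mathcomp Require Import all_boot.
Set Implicit Arguments. Unset Strict Implicit. Unset Printing Implicit Defensive.

(* Indices are 0-based: position t : 'I_k stands for index t+1 of the paper. *)

Definition psum (k : nat) (f : 'I_k -> nat) (j : nat) : nat :=
  \sum_(t < k | t < j) f t.

Definition ssum (k : nat) (f : 'I_k -> nat) (j : nat) : nat :=
  \sum_(t < k | j <= t) f t.

Definition Nsum (k : nat) (I : 'I_k -> nat) (j : nat) : nat :=
  \sum_(t < k | t < j) (I t).+1.

(* Filtered pointed Stirling number c_{beta,I}: number of maps
   f : [b_k] -> [N_k] (here 0-based: 'I_(b_k) -> 'I_(N_k), element x <-> x+1)
   with f([b_j]) subset [N_j] for all j = 1..k and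
   f([b_k]) ∪ {N_1,...,N_k} = [N_k]. *)
Definition cStir (k : nat) (beta I : 'I_k -> nat) : nat :=
  #|[set f : {ffun 'I_(psum beta k) -> 'I_(Nsum I k)} |
     [forall j : 'I_k, forall x : 'I_(psum beta k),
        (x < psum beta j.+1) ==> (f x < Nsum I j.+1)]
     && [forall y : 'I_(Nsum I k),
        [exists x, f x == y] || [exists j : 'I_k, y.+1 == Nsum I j.+1]]]|.

(* nprev n t = n_{t} in the paper's 1-based numbering for 0-based position t,
   i.e. the value preceding position t; equals n_0 = 0 when t = 0. *)
Definition nprev (k : nat) (n : 'I_k -> nat) (t : nat) : nat :=
  if t is u.+1 then (if insub u is Some u' then n u' else 0) else 0.

From mathcomp Require Import all_boot zify.
Set Implicit Arguments. Unset Strict Implicit. Unset Printing Implicit Defensive.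

(* Generalise c_(beta,I) to maps where each point x of the domain must land in
   [N_(lv x + 1)] for an arbitrary level function lv.  Splitting on the value of
   the last point (of level l) gives
     c(a, B+1) = N_(l+1)(a) c(a, B) + sum_(t <= l) a_t c(a - e_t, B):
   either it extends an admissible map, or it is the only non-marker of some
   gap t <= l missed by the other points, and deleting it shrinks gap t.
   Weighting by P(a) = prod_t C(m_t, a_t), m_t = n_t - n_(t-1) - 1, and using
   (i+1) C(m, i+1) = (m - i) C(m, i), the sum S(B) = sum_a c(a, B) P(a) obeys
   S(B+1) = sum_a c(a, B) P(a) (N_(l+1)(a) + sum_(t <= l) (m_t - a_t)) = n_l S(B),
   so S(B) = prod_(x < B) n_(lv x); taking lv x = the beta-block of x gives the
   theorem. *)

Lemma card_interval M lo hi : hi <= M ->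
  #|[set y : 'I_M | lo <= y < hi]| = hi - lo.
Proof.
move=> hM; rewrite -sum1_card big_mkcond /=.
rewrite (eq_bigr (fun y : 'I_M => nat_of_bool (lo <= y < hi))); last first.
  by move=> y _; rewrite inE; case: (_ && _).
rewrite -(big_mkord xpredT (fun y => nat_of_bool (lo <= y < hi))).
suff: forall m, \sum_(0 <= y < m) (lo <= y < hi) = minn hi m - minn lo m.
  by move=> ->; lia.
elim=> [|m IH]; first by rewrite big_geq.
by rewrite big_nat_recr //= IH; case: (boolP (lo <= m < hi)) => /= h; lia.
Qed.

Lemma card_sumE (T : finType) (A : {pred T}) : #|A| = \sum_x (x \in A).
Proof.
by rewrite -sum1_card big_mkcond; apply: eq_bigr => x _; case: (x \in A).
Qed.

Section Blocks.
Variables (k : nat) (a : 'I_k -> nat).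

Lemma psum0 : psum a 0 = 0.
Proof. by rewrite /psum big_pred0. Qed.

Lemma psumS (t : 'I_k) : psum a t.+1 = psum a t + a t.
Proof.
rewrite /psum (bigD1 t) //= addnC; congr (_ + _).
by apply: eq_bigl => s; rewrite ltnS ltn_neqAle andbC.
Qed.

Lemma leq_psum i j : i <= j -> psum a i <= psum a j.
Proof.
move=> hij; rewrite /psum !(big_mkcond (fun t : 'I_k => t < _)) /=.
apply: leq_sum => t _; case: ifP => h //.
by rewrite (leq_trans h hij).
Qed.

Lemma psum_ssum j : psum a j + ssum a j = psum a k.
Proof.
rewrite /psum /ssum [RHS](bigID (fun t : 'I_k => t < j)) /=; congr (_ + _).
  by apply: eq_bigl => t; rewrite ltn_ord.
by apply: eq_bigl => t; rewrite ltn_ord -leqNgt.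
Qed.

(* Junk value 0 when x >= psum a k. *)
Definition block (x : nat) : nat :=
  if [pick t : 'I_k | psum a t <= x < psum a t.+1] is Some t then val t else 0.

Lemma blockE (t : 'I_k) x : psum a t <= x < psum a t.+1 -> block x = t.
Proof.
move=> ht; rewrite /block; case: pickP => [s hs|/(_ t)]; last by rewrite ht.
move: hs ht => /andP[h1 h2] /andP[h3 h4].
by case: (ltngtP s t) => // [/leq_psum|/leq_psum]; lia.
Qed.

Lemma block_bounds x : x < psum a k ->
  block x < k /\ psum a (block x) <= x < psum a (block x).+1.
Proof.
move=> hx.
suff [t ht] : exists t : 'I_k, psum a t <= x < psum a t.+1 by rewrite (blockE ht).
suff : forall j, j <= k -> x < psum a j ->
    exists t : 'I_k, psum a t <= x < psum a t.+1 by move/(_ k (leqnn k) hx).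
elim=> [|j IH] hjk hj; first by rewrite psum0 in hj.
case: (ltnP x (psum a j)) => h; first exact: IH (ltnW hjk) h.
by exists (Ordinal hjk); rewrite h hj.
Qed.

Lemma psum_leq_block x j : x < psum a k -> (psum a j <= x) = (j <= block x).
Proof.
move=> hx; have [_ /andP[h1 h2]] := block_bounds hx.
case: (leqP j (block x)) => h; first exact: leq_trans (leq_psum h) h1.
by apply/negbTE; rewrite -ltnNge; apply: leq_trans h2 (leq_psum h).
Qed.

End Blocks.

Lemma card_block_geq k (a : 'I_k -> nat) j :
  #|[set x : 'I_(psum a k) | j <= block a x]| = ssum a j.
Proof.
rewrite -[ssum a j](addKn (psum a j)) psum_ssum.
rewrite -(card_interval (psum a j) (leqnn (psum a k))).
by apply: eq_card => x; rewrite !inE psum_leq_block ?ltn_ord // andbT.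
Qed.

Lemma card_block_eq k (a : 'I_k -> nat) (t : 'I_k) :
  #|[set x : 'I_(psum a k) | block a x == t]| = a t.
Proof.
have hle : psum a t.+1 <= psum a k by apply: leq_psum.
rewrite -[a t](addKn (psum a t)) -psumS -(card_interval _ hle).
apply: eq_card => x; rewrite !inE; apply/eqP/idP => [<-|]; last exact: blockE.
by have [] := block_bounds (ltn_ord x).
Qed.

(* In 0-based positions the markers stand for N_1, ..., N_k, and the block of
   width (a t).+1 ending at the marker N_(t+1) - 1 is the t-th gap. *)
Definition is_marker k (a : 'I_k -> nat) (y : nat) : bool :=
  [exists j : 'I_k, y.+1 == Nsum a j.+1].

Definition gap_of k (a : 'I_k -> nat) : nat -> nat := block (fun t => (a t).+1).

Section Gaps.
Variables (k : nat) (a : 'I_k -> nat).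
Local Notation N := (Nsum a).

Lemma NsumS (t : 'I_k) : N t.+1 = N t + (a t).+1.
Proof. exact: (psumS (fun t => (a t).+1)). Qed.

Lemma leq_Nsum i j : i <= j -> N i <= N j.
Proof. exact: (leq_psum (fun t => (a t).+1)). Qed.

Lemma gap_of_bounds y : y < N k ->
  gap_of a y < k /\ N (gap_of a y) <= y < N (gap_of a y).+1.
Proof. exact: (@block_bounds k (fun t => (a t).+1) y). Qed.

Lemma is_markerE y : y < N k -> is_marker a y = (y.+1 == N (gap_of a y).+1).
Proof.
move=> hy; have [hg /andP[h1 h2]] := gap_of_bounds hy.
apply/existsP/idP => [[j /eqP hj]|/eqP h]; last by exists (Ordinal hg); rewrite h.
have hj' : N j <= y < N j.+1 by rewrite NsumS in hj *; lia.
by rewrite /gap_of (blockE hj') hj.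
Qed.

Lemma nonmarker_gapE y (t : 'I_k) : y < N k ->
  (~~ is_marker a y && (gap_of a y == t)) = (N t <= y < N t + a t).
Proof.
move=> hy; rewrite is_markerE //; have [hg /andP[h1 h2]] := gap_of_bounds hy.
apply/idP/idP => [/andP[h3 /eqP h4]|/andP[h3 h4]].
  by move: h1 h2 h3; rewrite h4 NsumS; lia.
have -> : gap_of a y = t.
  by apply: blockE; change (N t <= y < N t.+1); rewrite NsumS; lia.
by rewrite eqxx andbT NsumS; lia.
Qed.

Lemma sum_nonmarkers (G : nat -> nat) :
  \sum_(y < N k | ~~ is_marker a y) G (gap_of a y) = \sum_(t < k) a t * G t.
Proof.
transitivity (\sum_(y < N k | ~~ is_marker a y)
                \sum_(t < k | gap_of a y == t) G t).
  apply: eq_bigr => y _; have [hg _] := gap_of_bounds (ltn_ord y).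
  by rewrite (big_pred1 (Ordinal hg)).
rewrite (exchange_big_dep xpredT) //=; apply: eq_bigr => t _.
rewrite sum_nat_const; congr (_ * _).
have hle : N t + a t <= N k.
  by apply: leq_trans (leq_Nsum (ltn_ord t)); rewrite NsumS leq_add2l.
rewrite -[a t](addKn (N t)) -(card_interval _ hle); apply: eq_card => y.
by rewrite !inE unfold_in /= nonmarker_gapE.
Qed.

Lemma card_nonmarkers_geq j :
  #|[set y : 'I_(N k) | ~~ is_marker a y && (j <= gap_of a y)]| = ssum a j.
Proof.
rewrite card_sumE (eq_bigr (fun y : 'I_(N k) =>
  if ~~ is_marker a y then nat_of_bool (j <= gap_of a y) else 0)); last first.
  by move=> y _; rewrite inE; case: (~~ _).
rewrite -big_mkcond /= (sum_nonmarkers (fun t => nat_of_bool (j <= t))).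
rewrite /ssum [RHS]big_mkcond /=; apply: eq_bigr => t _.
by case: (_ <= _); rewrite ?muln1 ?muln0.
Qed.

End Gaps.

Lemma forall_ordS B (P : pred 'I_B.+1) :
  [forall x, P x] = [forall x : 'I_B, P (lift ord_max x)] && P ord_max.
Proof.
apply/forallP/andP => [h|[/forallP h1 h2] x]; first by split => //; apply/forallP.
by case: (unliftP ord_max x) => [x' ->|->].
Qed.

Lemma exists_ordS B (P : pred 'I_B.+1) :
  [exists x, P x] = [exists x : 'I_B, P (lift ord_max x)] || P ord_max.
Proof.
apply/existsP/orP => [[x]|[/existsP [x h]|h]].
- case: (unliftP ord_max x) => [x' ->|->] h; last by right.
  by left; apply/existsP; exists x'.
- by exists (lift ord_max x).
- by exists ord_max.
Qed.

Lemma forall_but (T : finType) (P : pred T) y :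
  [forall z, (z == y) || P z] =
  [forall z, P z] || ~~ P y && [forall z, (z == y) || P z].
Proof.
case: (boolP (P y)) => Py /=; last first.
  by have /negbTE -> : ~~ [forall z, P z] by apply/forallPn; exists y.
rewrite orbF.
apply/forallP/forallP => h z; last by rewrite h orbT.
by case: (eqVneq z y) => [->|nzy] //; have := h z; rewrite (negbTE nzy).
Qed.

Section FfunRcons.
Variables (B : nat) (T : finType).

Definition ffun_rcons (f : {ffun 'I_B -> T}) (y : T) : {ffun 'I_B.+1 -> T} :=
  [ffun x => if unlift ord_max x is Some x' then f x' else y].

Lemma ffun_rcons_lift f y x : ffun_rcons f y (lift ord_max x) = f x.
Proof. by rewrite ffunE liftK. Qed.

Lemma ffun_rcons_max f y : ffun_rcons f y ord_max = y.
Proof. by rewrite ffunE unlift_none. Qed.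

Lemma sum_ffunS (F : {ffun 'I_B.+1 -> T} -> nat) :
  \sum_f F f = \sum_(f : {ffun 'I_B -> T}) \sum_(y : T) F (ffun_rcons f y).
Proof.
rewrite pair_big /=.
rewrite (reindex (fun p : {ffun 'I_B -> T} * T => ffun_rcons p.1 p.2)) //.
exists (fun f : {ffun 'I_B.+1 -> T} => ([ffun x => f (lift ord_max x)], f ord_max)).
  move=> [f y] _ /=; rewrite ffun_rcons_max; congr (_, _).
  by apply/ffunP => x; rewrite ffunE ffun_rcons_lift.
move=> f _; apply/ffunP => x; rewrite ffunE.
by case: unliftP => [x' ->|->] //=; rewrite ffunE.
Qed.

End FfunRcons.

Lemma card_ffun_avoiding B n (y : 'I_n) (P : pred {ffun 'I_B -> 'I_n}) :
  #|[set f : {ffun 'I_B -> 'I_n} | ~~ [exists x, f x == y] && P f]| =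
  #|[set g : {ffun 'I_B -> 'I_n.-1} | P [ffun x => lift y (g x)]]|.
Proof.
pose lf (g : {ffun 'I_B -> 'I_n.-1}) := [ffun x => lift y (g x)].
have lf_inj : injective lf.
  move=> g1 g2 /ffunP e; apply/ffunP => x; apply: (@lift_inj _ y).
  by have := e x; rewrite !ffunE.
rewrite -(card_imset _ lf_inj); apply: eq_card => f; rewrite inE.
apply/andP/imsetP => [[/existsPn hy Pf]|[g]]; last first.
  rewrite inE => Pg ->; split=> //; apply/existsPn => x.
  by rewrite ffunE eq_sym neq_lift.
have /fin_all_exists [g hg] : forall x, exists z, f x = lift y z.
  by move=> x; have := hy x; rewrite eq_sym => /unlift_some [z -> _]; exists z.
have ef : f = lf [ffun x => g x] by apply/ffunP => x; rewrite !ffunE hg.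
by rewrite ef in Pf *; exists [ffun x => g x]; rewrite ?inE.
Qed.

Section Admissible.
Variables (k : nat) (a : 'I_k -> nat) (lv : nat -> 'I_k).
Local Notation N := (Nsum a).

Definition bounded B M (f : {ffun 'I_B -> 'I_M}) : bool :=
  [forall x, f x < N (lv x).+1].

Definition covers B M (f : {ffun 'I_B -> 'I_M}) (z : 'I_M) : bool :=
  [exists x, f x == z] || is_marker a z.

Definition admissible_maps B M : {set {ffun 'I_B -> 'I_M}} :=
  [set f | bounded f && [forall z, covers f z]].

Definition cStir_lv B : nat := #|admissible_maps B (N k)|.

Lemma admissible_rcons B M (f : {ffun 'I_B -> 'I_M}) y :
  (ffun_rcons f y \in admissible_maps B.+1 M) =
  [&& bounded f, y < N (lv B).+1 & [forall z, (z == y) || covers f z]].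
Proof.
rewrite inE /bounded forall_ordS ffun_rcons_max -andbA; congr [&& _, _ & _].
  by apply: eq_forallb => x; rewrite ffun_rcons_lift lift_max.
apply: eq_forallb => z; rewrite /covers exists_ordS ffun_rcons_max eq_sym.
have -> : [exists x, ffun_rcons f y (lift ord_max x) == z] = [exists x, f x == z].
  by apply: eq_existsb => x; rewrite ffun_rcons_lift.
by rewrite -orbA orbCA orbA.
Qed.

(* A valid extension of f by a last value y either extends an admissible f,
   or y is the only non-marker that f misses. *)
Lemma admissible_rcons_split B M (f : {ffun 'I_B -> 'I_M}) y :
  (ffun_rcons f y \in admissible_maps B.+1 M) =
    (f \in admissible_maps B M) * (y < N (lv B).+1) +
    ((y < N (lv B).+1) && ~~ is_marker a y) *
    (~~ [exists x, f x == y] && (bounded f && [forall z, (z == y) || covers f z]))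
  :> nat.
Proof.
rewrite admissible_rcons forall_but inE.
have : [forall z, covers f z] -> covers f y by move/forallP.
case: [forall z, covers f z]; case: [forall z, (z == y) || covers f z];
rewrite /covers; case: (bounded f); case: (y < _); case: (is_marker a y);
by case: [exists x, _] => /= h //; have := h isT.
Qed.

Lemma cStir_lv_rcons B :
  cStir_lv B.+1 = N (lv B).+1 * cStir_lv B +
  \sum_(y < N k | (y < N (lv B).+1) && ~~ is_marker a y)
    #|[set f : {ffun 'I_B -> 'I_(N k)} | ~~ [exists x, f x == y] &&
        (bounded f && [forall z, (z == y) || covers f z])]|.
Proof.
rewrite /cStir_lv card_sumE sum_ffunS.
under eq_bigr => f _ do under eq_bigr => y _ do
  rewrite (admissible_rcons_split f y).
under eq_bigr => f _ do rewrite big_split /=.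
rewrite big_split /=; congr (_ + _).
  rewrite card_sumE big_distrr /=; apply: eq_bigr => f _.
  rewrite -big_distrr /= mulnC; congr (_ * _).
  have hle : N (lv B).+1 <= N k by apply: leq_Nsum.
  rewrite -[RHS]subn0 -(card_interval 0 hle) card_sumE.
  by apply: eq_bigr => y _; rewrite inE.
rewrite exchange_big [RHS]big_mkcond /=; apply: eq_bigr => y _.
rewrite -big_distrr /= card_sumE.
by case: (_ && _); rewrite ?mul1n ?mul0n //; apply: eq_bigr => f _; rewrite inE.
Qed.

End Admissible.

Definition decr_at k (a : 'I_k -> nat) (t : nat) : 'I_k -> nat :=
  fun s => if val s == t then (a s).-1 else a s.

Section DeleteNonmarker.
Variables (k : nat) (a : 'I_k -> nat) (t : 'I_k) (y : nat).
Hypothesis hy : Nsum a t <= y < Nsum a t + a t.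
Local Notation N := (Nsum a).

Lemma Nsum_decr j : Nsum (decr_at a t) j = N j - (t < j).
Proof.
rewrite /Nsum /psum; case: (ltnP t j) => h.
  rewrite (bigD1 t) //= [in RHS](bigD1 t) //= /decr_at eqxx.
  rewrite (eq_bigr (fun s : 'I_k => (a s).+1)); first by lia.
  by move=> s /andP[_ /negbTE]; rewrite -val_eqE /= => ->.
rewrite subn0; apply: eq_bigr => s hs; rewrite /decr_at.
by case: (val s =P val t) => // e; move: hs; rewrite e ltnNge h.
Qed.

Lemma bump_ltn_Nsum z j : (bump y z < N j) = (z < Nsum (decr_at a t) j).
Proof.
rewrite Nsum_decr /bump; move: hy => /andP[h1 h2].
case: (ltnP t j) => h; have := leq_Nsum a h; rewrite ?NsumS /=;
  by case: (leqP y z) => /= h3 h4; lia.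
Qed.

Lemma is_marker_bump z : is_marker a (bump y z) = is_marker (decr_at a t) z.
Proof.
apply: eq_existsb => j; rewrite Nsum_decr /bump; move: hy => /andP[h1 h2].
case: (ltnP t j.+1) => h; have := leq_Nsum a h; rewrite ?NsumS /=;
  by case: (leqP y z) => /= h3 h4; apply/eqP/eqP; lia.
Qed.

End DeleteNonmarker.

Section Recursion.
Variables (k : nat) (lv : nat -> 'I_k).

Lemma cStir_lv_missing (a : 'I_k -> nat) B (y : 'I_(Nsum a k)) :
  ~~ is_marker a y ->
  #|[set f : {ffun 'I_B -> 'I_(Nsum a k)} | ~~ [exists x, f x == y] &&
      (bounded a lv f && [forall z, (z == y) || covers a f z])]|
  = cStir_lv (decr_at a (gap_of a y)) lv B.
Proof.
move=> hym; have [hg _] := gap_of_bounds (ltn_ord y); pose t := Ordinal hg.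
have hy : Nsum a t <= y < Nsum a t + a t by rewrite -nonmarker_gapE ?hym /=.
change (gap_of a y) with (val t).
rewrite card_ffun_avoiding /cStir_lv (Nsum_decr hy) ltn_ord subn1.
apply: eq_card => g; rewrite !inE; congr (_ && _).
  by apply: eq_forallb => x; rewrite ffunE /= (bump_ltn_Nsum hy).
have covers_lift z : covers a [ffun x => lift y (g x)] (lift y z) =
                     covers (decr_at a t) g z.
  rewrite /covers -(is_marker_bump hy); congr (_ || _).
  by apply: eq_existsb => x; rewrite ffunE (inj_eq (@lift_inj _ y)).
apply/forallP/forallP => h z.
  by have := h (lift y z); rewrite covers_lift eq_sym (negbTE (neq_lift y z)).
case: (eqVneq z y) => [-> //|]; rewrite eq_sym => /unlift_some[z' -> _].
by rewrite covers_lift h orbT.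
Qed.

Lemma cStir_lv_ext (a a' : 'I_k -> nat) B : a =1 a' ->
  cStir_lv a lv B = cStir_lv a' lv B.
Proof.
move=> e; have eN j : Nsum a j = Nsum a' j by apply: eq_bigr => t _; rewrite e.
have em y : is_marker a y = is_marker a' y by apply: eq_existsb => j; rewrite eN.
rewrite /cStir_lv eN; apply: eq_card => f; rewrite !inE /bounded /covers.
under eq_forallb => x do rewrite eN.
by under [X in _ && X]eq_forallb => y do rewrite em.
Qed.

Lemma cStir_lvS (a : 'I_k -> nat) B : cStir_lv a lv B.+1 =
  Nsum a (lv B).+1 * cStir_lv a lv B +
  \sum_(t < k | t <= lv B) a t * cStir_lv (decr_at a t) lv B.
Proof.
rewrite cStir_lv_rcons; congr (_ + _).
rewrite (eq_bigr (fun y : 'I_(Nsum a k) =>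
  cStir_lv (decr_at a (gap_of a y)) lv B)) => [|y /andP[_ hy]]; last first.
  by rewrite cStir_lv_missing.
rewrite big_mkcondl /= (eq_bigr (fun y : 'I_(Nsum a k) =>
  (gap_of a y <= lv B) * cStir_lv (decr_at a (gap_of a y)) lv B)); last first.
  move=> y _; rewrite ltnNge (psum_leq_block (a := fun t => (a t).+1)) //.
  rewrite -ltnNge ltnS.
  by case: (_ <= _); rewrite ?mul1n ?mul0n.
rewrite (sum_nonmarkers a (fun t => (t <= lv B) * cStir_lv (decr_at a t) lv B)).
rewrite [RHS]big_mkcond /=; apply: eq_bigr => t _.
by case: (_ <= _); rewrite ?mul1n ?muln0 ?muln1.
Qed.

(* Every non-marker of a gap >= j must be hit, and only points of level >= j
   can reach it. *)
Lemma cStir_lv_gt0_ssum (a : 'I_k -> nat) B j : 0 < cStir_lv a lv B ->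
  ssum a j <= #|[set x : 'I_B | j <= lv x]|.
Proof.
move=> /card_gt0P [f]; rewrite inE => /andP[/forallP hb /forallP hc].
rewrite -card_nonmarkers_geq; apply: leq_trans (leq_imset_card f _).
apply/subset_leq_card/subsetP => y; rewrite inE => /andP[hm hj].
have := hc y; rewrite /covers (negbTE hm) orbF => /existsP [x /eqP hx].
apply/imsetP; exists x => //; rewrite inE.
rewrite -(psum_leq_block (a := fun t => (a t).+1)) // in hj.
change (is_true (Nsum a j <= y)) in hj; have := hb x; rewrite hx.
by case: (leqP j (lv x)) => // /(leq_Nsum a); lia.
Qed.

Lemma cStir_lv_gt0_le (a : 'I_k -> nat) B (t : 'I_k) :
  0 < cStir_lv a lv B -> a t <= B.
Proof.
move=> /(cStir_lv_gt0_ssum 0) h.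
have h1 : a t <= ssum a 0 by rewrite /ssum (bigD1 t) //= leq_addr.
by rewrite (leq_trans h1 (leq_trans h _)) // -[B in _ <= B]card_ord max_card.
Qed.

Lemma cStir_lv_zero : cStir_lv (fun _ : 'I_k => 0) lv 0 = 1.
Proof.
rewrite /cStir_lv (_ : admissible_maps _ _ _ _ = setT).
  by rewrite cardsT card_ffun !card_ord.
apply/setP => f; rewrite !inE; apply/andP; split; first by apply/forallP => -[].
apply/forallP => y; rewrite /covers is_markerE //.
have [hg /andP[h1 h2]] := gap_of_bounds (ltn_ord y).
rewrite (NsumS _ (Ordinal hg)) /= in h2 *.
by apply/orP; right; apply/eqP; lia.
Qed.

End Recursion.

Definition gap_len k (n : 'I_k -> nat) (t : 'I_k) : nat := n t - nprev n t - 1.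

Definition binprod k (n a : 'I_k -> nat) : nat :=
  \prod_(t < k) 'C(gap_len n t, a t).

Lemma nprevS k (n : 'I_k -> nat) u (hu : u < k) : nprev n u.+1 = n (Ordinal hu).
Proof. by rewrite /nprev insubT. Qed.

Section Binomials.
Variables (k : nat) (n : 'I_k -> nat).

Lemma binprod_gt0 (a : 'I_k -> nat) t : 0 < binprod n a -> a t <= gap_len n t.
Proof.
move=> h; rewrite -bin_gt0; move: h; rewrite /binprod (bigD1 t) //=.
by case: (posnP 'C(gap_len n t, a t)) => [->|//]; rewrite mul0n.
Qed.

Lemma binprod_incr (a a' : 'I_k -> nat) (t : 'I_k) :
  a' t = (a t).+1 -> (forall s, s != t -> a' s = a s) ->
  (a t).+1 * binprod n a' = (gap_len n t - a t) * binprod n a.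
Proof.
move=> et es; rewrite /binprod (bigD1 t) //= [in RHS](bigD1 t) //= et !mulnA.
rewrite mul_bin_left.
by congr (_ * _); apply: eq_bigr => s /es ->.
Qed.

Hypotheses (hpos : forall t, 0 < n t)
  (hinc : forall s t : 'I_k, s < t -> n s < n t).

Lemma nprev_ltn (t : 'I_k) : nprev n t < n t.
Proof.
case: t => [[|u] hu]; first exact: hpos.
have hu' : u < k by apply: ltnW.
by have := nprevS n hu'; rewrite /= => ->; apply: hinc.
Qed.

Lemma sum_nprev_diff (l : 'I_k) : \sum_(t < k | t <= l) (n t - nprev n t) = n l.
Proof.
case: l => l; elim: l => [|l IH] hl.
  by rewrite (big_pred1 (Ordinal hl)) ?subn0 // => t; rewrite /= leqn0 -val_eqE.
have hl' : l < k by apply: ltnW.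
rewrite (bigD1 (Ordinal hl)) // (eq_bigl (fun t : 'I_k => t <= l)); last first.
  by move=> t; rewrite -val_eqE /=; apply/idP/idP; lia.
rewrite IH (nprevS n hl').
by rewrite /= subnK // ltnW //; apply: hinc.
Qed.

Lemma Nsum_add_gap_lens (a : 'I_k -> nat) (l : 'I_k) :
  (forall t, a t <= gap_len n t) ->
  Nsum a l.+1 + \sum_(t < k | t <= l) (gap_len n t - a t) = n l.
Proof.
move=> ha; rewrite /Nsum /psum (eq_bigl (fun t : 'I_k => t <= l)) // -big_split /=.
rewrite -[RHS]sum_nprev_diff; apply: eq_bigr => t _.
by have := ha t; have := nprev_ltn t; rewrite /gap_len; lia.
Qed.

End Binomials.

Section ShiftAt.
Variables (k R : nat) (t : 'I_k).

Definition incr_at (J : {ffun 'I_k -> 'I_R.+1}) : {ffun 'I_k -> 'I_R.+1} :=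
  [ffun s => if s == t then inord (J s).+1 else J s].

Definition decr_ord_at (J : {ffun 'I_k -> 'I_R.+1}) : {ffun 'I_k -> 'I_R.+1} :=
  [ffun s => if s == t then inord (J s).-1 else J s].

Lemma incr_at_eq (J : {ffun 'I_k -> 'I_R.+1}) :
  J t < R -> incr_at J t = (J t).+1 :> nat.
Proof. by move=> h; rewrite ffunE eqxx inordK. Qed.

Lemma incr_at_neq (J : {ffun 'I_k -> 'I_R.+1}) s :
  s != t -> incr_at J s = J s :> nat.
Proof. by rewrite ffunE => /negbTE ->. Qed.

(* Entries live in 'I_R.+1, so incrementing the entry R wraps around to 0. *)
Lemma sum_shift_at (F : {ffun 'I_k -> 'I_R.+1} -> nat) :
  (forall I : {ffun 'I_k -> 'I_R.+1}, I t = 0 :> nat -> F I = 0) ->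
  \sum_I F I = \sum_(J : {ffun 'I_k -> 'I_R.+1} | J t < R) F (incr_at J).
Proof.
move=> hF; rewrite (bigID (fun I : {ffun 'I_k -> 'I_R.+1} => 0 < I t)) /=.
rewrite [X in _ + X]big1 ?addn0 => [|I]; last by rewrite lt0n negbK => /eqP /hF.
rewrite (reindex_onto incr_at decr_ord_at) /=; last first.
  move=> I hI; apply/ffunP => s; rewrite !ffunE; case: eqP => [->|] //.
  have h1 : (I t).-1 < R.+1 by have := ltn_ord (I t); lia.
  by apply: val_inj; rewrite /= inordK (inordK h1) ?prednK.
apply: eq_bigl => J; case: (ltnP (J t) R) => hJ.
  rewrite incr_at_eq // andTb; apply/eqP/ffunP => s; rewrite !ffunE.
  by case: eqP => [->|//]; apply: val_inj; rewrite /= !inordK //; lia.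
have -> : incr_at J t = ord0.
  apply: val_inj; rewrite ffunE eqxx /= /inord /insubd insubF //.
  by apply/negbTE; rewrite -leqNgt ltnS.
by [].
Qed.

End ShiftAt.

Local Notation vals I := (fun s => nat_of_ord (I s)).

Section Summation.
Variables (k : nat) (n : 'I_k -> nat) (lv : nat -> 'I_k).

Lemma sum_decr_shift R B (t : 'I_k) : B < R ->
  \sum_(I : {ffun 'I_k -> 'I_R.+1})
    I t * cStir_lv (decr_at (vals I) t) lv B * binprod n (vals I) =
  \sum_(I : {ffun 'I_k -> 'I_R.+1})
    cStir_lv (vals I) lv B * binprod n (vals I) * (gap_len n t - I t).
Proof.
move=> hBR; rewrite (sum_shift_at (t := t)); last by move=> I ->.
(* Since B < R, the maps J with J t = R have c(J, B) = 0. *)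
rewrite [RHS](bigID (fun I : {ffun 'I_k -> 'I_R.+1} => I t < R)) /=.
rewrite [X in _ + X]big1 ?addn0 => [|I]; last first.
  rewrite -leqNgt => hI; case: (posnP (cStir_lv (vals I) lv B)) => [->//|].
  by move=> /(cStir_lv_gt0_le t); lia.
apply: eq_bigr => J hJ.
have e_t := incr_at_eq hJ; have e_s := @incr_at_neq k R t J.
rewrite e_t (@cStir_lv_ext _ _ _ (vals J)); last first.
  move=> s; rewrite /decr_at; case: (eqVneq s t) => [->|ne].
    by rewrite eqxx e_t.
  by rewrite ifN ?e_s // val_eqE.
by rewrite mulnAC (@binprod_incr _ n (vals J) (vals (incr_at t J)) t e_t e_s);
  nia.
Qed.

Hypotheses (hpos : forall t, 0 < n t)
  (hinc : forall s t : 'I_k, s < t -> n s < n t).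

Lemma sum_cStir_lv_binprod R B : B <= R ->
  \sum_(I : {ffun 'I_k -> 'I_R.+1}) cStir_lv (vals I) lv B * binprod n (vals I) =
  \prod_(x < B) n (lv x).
Proof.
elim: B => [|B IH] hB.
  rewrite big_ord0 (bigD1 [ffun => ord0]) //= big1 ?addn0 => [|I hI].
    rewrite (@cStir_lv_ext _ _ _ (fun _ => 0)) => [|s]; last by rewrite ffunE.
    by rewrite cStir_lv_zero mul1n /binprod big1 // => t _; rewrite ffunE bin0.
  case: (posnP (cStir_lv (vals I) lv 0)) => [->//|h].
  case/eqP: hI; apply/ffunP => t; apply: val_inj; rewrite ffunE /=.
  by have := cStir_lv_gt0_le t h; lia.
rewrite big_ord_recr /= -IH 1?ltnW // big_distrl /=.
under eq_bigr => I _ do rewrite cStir_lvS mulnDl [X in _ + X]big_distrl /=.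
rewrite big_split /= [X in _ + X]exchange_big /=.
under [X in _ + X]eq_bigr => t _ do rewrite sum_decr_shift //.
rewrite [X in _ + X]exchange_big -big_split /=; apply: eq_bigr => I _.
rewrite -big_distrr /=.
case: (posnP (binprod n (vals I))) => [->|hp]; first by rewrite !muln0 !mul0n.
rewrite -(Nsum_add_gap_lens hpos hinc (lv B) (fun t => binprod_gt0 t hp)).
by rewrite mulnDr; congr (_ + _); rewrite -mulnA mulnC.
Qed.

End Summation.

Section BetaLevels.
Variables (k : nat) (beta : 'I_k.+1 -> nat).
Local Notation B := (psum beta k.+1).

Definition beta_level (x : nat) : 'I_k.+1 := inord (block beta x).

Lemma beta_level_bounds (x : 'I_B) :
  psum beta (beta_level x) <= x < psum beta (beta_level x).+1.
Proof. by have [hx] := block_bounds (ltn_ord x); rewrite /beta_level inordK. Qed.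

Lemma beta_levelE (x : 'I_B) : beta_level x = block beta x :> nat.
Proof. by rewrite inordK //; have [] := block_bounds (ltn_ord x). Qed.

Lemma prod_beta_level (n : 'I_k.+1 -> nat) :
  \prod_(x < B) n (beta_level x) = \prod_(t < k.+1) n t ^ beta t.
Proof.
rewrite (partition_big (fun x : 'I_B => beta_level x) xpredT) //=.
apply: eq_bigr => t _; rewrite (eq_bigr (fun _ => n t)) => [|x /eqP -> //].
rewrite prod_nat_const -(card_block_eq beta t); congr (_ ^ _).
by apply: eq_card => x; rewrite !inE unfold_in /= beta_levelE.
Qed.

Lemma card_beta_level_geq j :
  #|[set x : 'I_B | j <= beta_level x]| = ssum beta j.
Proof.
rewrite -card_block_geq; apply: eq_card => x.
by rewrite !inE beta_levelE.
Qed.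

Lemma cStir_beta_level (a : 'I_k.+1 -> nat) :
  cStir beta a = cStir_lv a beta_level B.
Proof.
rewrite /cStir /cStir_lv; apply: eq_card => f; rewrite !inE /bounded /covers.
congr (_ && _); apply/forallP/forallP => [h x|h j].
  have /andP[_ hx] := beta_level_bounds x.
  by move/forallP: (h (beta_level x)) => /(_ x); rewrite hx.
apply/forallP => x; apply/implyP => hx; apply: leq_trans (h x) (leq_Nsum a _).
have /andP[hlo _] := beta_level_bounds x.
by case: (leqP (beta_level x) j) => // /(leq_psum beta); lia.
Qed.

End BetaLevels.

Lemma cStir_nil (beta I : 'I_0 -> nat) : cStir beta I = 1.
Proof.
rewrite /cStir (_ : [set f | _] = setT).
  by rewrite cardsT card_ffun !card_ord /psum big_ord0.
apply/setP => f; rewrite !inE; apply/andP; split; apply/forallP => -[] // y hy.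
have I0 : Nsum I 0 = 0 by rewrite /Nsum /psum big_ord0.
by move: (leq_trans hy (eq_leq I0)).
Qed.

Theorem lemma5p3 (k : nat) (beta : 'I_k -> nat) (n : 'I_k -> nat)
  (hpos : forall t : 'I_k, 0 < n t)
  (hinc : forall s t : 'I_k, s < t -> n s < n t) :
  \prod_(t < k) n t ^ beta t =
  \sum_(I : {ffun 'I_k -> 'I_(psum beta k).+1} |
          [forall j : 'I_k, ssum (fun t => nat_of_ord (I t)) j <= ssum beta j])
     cStir beta (fun t => nat_of_ord (I t)) *
     \prod_(t < k) 'C(n t - nprev n t - 1, I t).
Proof.
case: k beta n hpos hinc => [|k] beta n hpos hinc.
  rewrite big_ord0 (big_pred1 [ffun => ord0]) => [|I]; last first.
    by apply/idP/idP => _; [apply/eqP/ffunP => -[] | apply/forallP => -[]].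
  by rewrite cStir_nil big_ord0.
rewrite -(prod_beta_level beta n).
rewrite -(sum_cStir_lv_binprod (beta_level beta) hpos hinc (leqnn _)).
rewrite [RHS]big_mkcond /=; apply: eq_bigr => I _.
case: ifP => [_|/negbT]; first by rewrite cStir_beta_level.
rewrite negb_forall => /existsP [j]; rewrite -ltnNge -card_beta_level_geq => hj.
case: (posnP (cStir_lv (vals I) (beta_level beta) (psum beta k.+1))) => [->//|].
by move=> /(cStir_lv_gt0_ssum j); lia.
Qed.
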